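(* Consider REFORM with the RPTSC reward scheme with at most $k=2$ pairings, in the setting and expected-reward model described in the context. Let agent $a_i$ have evaluation $x_i$ and submit report $y_i$ at time $t_i$, and write $q_{y_i}=Q_p(y_i)$, $q'_{y_i}=Q_{p|i}(y_i\mid x_i)$. Then the expected reward of $a_i$ is $$\mathbb{E}[R_i(y_i\mid x_i);k=2]=\begin{cases}\alpha\beta(t_i)\left[\frac{q'_{y_i}}{q_{y_i}}-1+r(1-q'_{y_i})\frac{q'_{y_i}}{q_{y_i}}\right]\left[1-(1-q_{y_i})^{n-1}\right], & \text{if } q_{y_i}>0,\\ 0, & \text{otherwise.}\end{cases}$$
   Context: Setting. In each round there are $n\ge 2$ statistically independent, a-priori similar tasks with a common finite answer space $\mathcal{X}$; each task is solved by at least two agents. An agent $a_i$ solving task $\tau$ obtains (if it exerts high effort) an evaluation $x_i\in\mathcal{X}$, and submits a report $y_i\in\mathcal{X}$ at time $t_i$. A decay factor $\beta(t)>0$, decreasing in $t$, multiplies all rewards. Each agent has a reputation (TERM) score $\Omega$. REFORM with RPTSC reward (parameters $\alpha>0$ and maximal number of pairings $k\ge 1$): sample $n-1$ reports, one from each task other than $\tau$, and let $f(y_i)$ be the fraction of them equal to $y_i$. Repeatedly choose a random peer $a_p$ on task $\tau$ with report $y_p$ and TERM score $\Omega_p$: if $y_i=y_p$ the reward is $\alpha\beta(t_i)(1/f(y_i)-1)$ and the procedure stops; otherwise, if $\Omega_i\le\Omega_p$ or $k$ pairings have been used, the reward is $-\alpha\beta(t_i)$ if $f(y_i)\neq 0$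 and $0$ if $f(y_i)=0$, and the procedure stops; otherwise a new peer is drawn. (For $k=1$ this is the RPTSC reward times $\beta(t_i)$.) Beliefs. $Q_p(y)$ (written $q_y$) is $a_i$'s belief that a random peer reports $y$; $Q_{p|i}(y\mid x_i)$ (written $q'_y$) is $a_i$'s belief that a random peer on the same task reports $y$ given $a_i$'s evaluation $x_i$. All beliefs are fully mixed (strictly between $0$ and $1$). $r\in[0,1]$ is $a_i$'s belief that a random peer has TERM score less than $\Omega_i$; it is the same for every peer. Expected-reward model. If $q_{y_i}>0$, let $E'=\alpha\left(\frac{q'_{y_i}}{q_{y_i}}-1\right)\left(1-(1-q_{y_i})^{n-1}\right)$ (expected RPTSC reward of a single pairing, without decay) and $M'=\alpha\left(\frac{1}{q_{y_i}}-1\right)\left(1-(1-q_{y_i})^{n-1}\right)$ (expected reward when the report matches the peer's, without decay). The expected reward is computed pairing by pairing, independently: with probability $1-r$ the peer's TERM score is not below $\Omega_i$, and the pairing is final with expected reward $\beta(t_i)E'$; the $k$-th pairing is always final with expected reward $\beta(t_i)E'$; otherwise (probability $r$, not the last pairing) with probability $q'_{y_i}$ the reports match and the reward is $\beta(t_i)M'$, and with probability $1-q'_{y_i}$ a new pairing is made. *)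

From mathcomp Require Import all_boot all_order all_algebra.
Set Implicit Arguments. Unset Strict Implicit. Unset Printing Implicit Defensive.
Import Order.TTheory GRing.Theory Num.Theory.
Local Open Scope ring_scope.

(* E' : expected RPTSC reward of a single pairing, without decay
   (q = q_{y_i}, q' = q'_{y_i}, n = number of tasks). *)
Definition Eprime (R : realFieldType) (alpha q q' : R) (n : nat) : R :=
  alpha * (q' / q - 1) * (1 - (1 - q) ^+ (n - 1)).

(* M' : expected reward when the report matches the peer's, without decay. *)
Definition Mprime (R : realFieldType) (alpha q : R) (n : nat) : R :=
  alpha * (1 / q - 1) * (1 - (1 - q) ^+ (n - 1)).

(* Expected reward (times the decay factor b = beta(t_i)) accumulated from
   the current pairing on, when m+1 pairings (including the current one)
   remain available.  With probability 1-r the pairing is final (reward b*E');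
   the last pairing is always final (reward b*E'); otherwise (prob. r) with
   prob. q' the reports match (reward b*M'), and with prob. 1-q' a new pairing
   is made. *)
Fixpoint reward_remaining (R : realFieldType) (alpha b r q q' : R) (n m : nat)
  : R :=
  match m with
  | 0%N => b * Eprime alpha q q' n
  | m'.+1 => (1 - r) * (b * Eprime alpha q q' n)
             + r * (q' * (b * Mprime alpha q n)
                    + (1 - q') * reward_remaining alpha b r q q' n m')
  end.

Definition expected_reward (R : realFieldType) (alpha : R) (beta : R -> R)
  (t r q q' : R) (n k : nat) : R :=
  if 0 < q then reward_remaining alpha (beta t) r q q' n (k.-1) else 0.

From mathcomp Require Import all_boot all_order all_algebra.
From mathcomp Require Import ring.
Import Order.TTheory GRing.Theory Num.Theory.
Local Open Scope ring_scope.

(* With two pairings the expected reward is b E' corrected by the event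
   "first peer has lower TERM score and reports match" (probability r q'),
   which replaces E' by M'; and M' - E' = alpha (1 - q') / q (1 - (1-q)^(n-1)).
   The identity is purely algebraic: of the hypotheses only q > 0 is used. *)

Section RewardRemaining.

Variables (R : realFieldType) (alpha b r q q' : R) (n : nat).

Let E := Eprime alpha q q' n.
Let M := Mprime alpha q n.

Lemma Mprime_sub_Eprime : q != 0 ->
  M - E = alpha * ((1 - q') / q) * (1 - (1 - q) ^+ (n - 1)).
Proof. by move=> q_neq0; rewrite /M /E /Mprime /Eprime; field. Qed.

Lemma reward_remainingS m :
  reward_remaining alpha b r q q' n m.+1 =
  b * E + r * (q' * (b * (M - E))
               + (1 - q') * (reward_remaining alpha b r q q' n m - b * E)).
Proof. by rewrite /= /E /M; ring. Qed.

Lemma reward_remaining1 :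
  reward_remaining alpha b r q q' n 1 = b * (E + r * q' * (M - E)).
Proof. by rewrite reward_remainingS /= /E /M; ring. Qed.

End RewardRemaining.

Theorem lemma3 (R : realFieldType) (alpha : R) (beta : R -> R) (n : nat)
  (t_i r q q' : R) :
  (2 <= n)%N -> 0 < alpha ->
  (forall t, 0 < beta t) ->
  (forall t s, t < s -> beta s < beta t) ->
  0 <= r <= 1 -> 0 <= q < 1 -> 0 < q' < 1 ->
  expected_reward alpha beta t_i r q q' n 2 =
  if 0 < q then
    alpha * beta t_i * ((q' / q - 1 + r * (1 - q') * (q' / q))
                        * (1 - (1 - q) ^+ (n - 1)))
  else 0.
Proof.
move=> _ _ _ _ _ _ _.
rewrite /expected_reward; case: ifP => // q_gt0.
rewrite reward_remaining1 Mprime_sub_Eprime ?gt_eqF // /Eprime.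
ring.
Qed.
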